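(* Let $S\subseteq V$ and $u\in V\setminus S$, and write $\Delta(S,u)=r(S\cup\{u\})-r(S)$. If $S\cap A_u=\emptyset$, then $$\Delta(S,u)=\Big(n_u-\Big|\bigcup_{j\in N_u\cap S}N_j\Big|\Big)\mathbb{P}\{Z_u>\tau\}.$$ If $S\cap A_u\neq\emptyset$, let $v$ be the element of $S\cap A_u$ of maximal depth (the closest ancestor of $u$ in $S$); then $$\Delta(S,u)=\Big(n_u-\Big|\bigcup_{j\in N_u\cap S}N_j\Big|\Big)\Big(\mathbb{P}\{Z_u>\tau\}-\mathbb{P}\{Z_v>\tau\}\Big).$$ In both cases $\Delta(S,u)\ge 0$.
   Context: Let $G=(V,E)$ be a finite tree with $|V|=n$, rooted at a node $s$ (the infection source). For a node $i$: $d_i$ is its depth (number of edges on the path from $s$ to $i$); $A_i$ is the set of ancestors of $i$ (strict, including its parent); $N_i$ is the set of descendants of $i$ (strict, not including $i$); $n_i=|N_i|$. Each edge $e$ carries an independent random variable $X_e\sim\mathrm{Exp}(\lambda)$ with $\lambda>0$, and $Z_i=\sum_{e \text{ on the path from } s \text{ to } i}X_e$ is the infection time of $i$ (so $Z_s=0$; $Z_i$ is a sum of $d_i$ i.i.d. $\mathrm{Exp}(\lambda)$ variables). The immunization time $\tau\ge 0$ is a single random variable, common to all vaccinated nodes and independent of $(X_e)_{e\in E}$. For $S\subseteq V$ (the vaccinated set), a node $i\in S$ becomes immune iff $Z_i>\tau$, and an immune node saves all its descendants. The expected total reward is defined as $r(S)=\mathbb{E}\big[\,\big|\bigcup_{i\in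 S:\,Z_i>\tau}N_i\big|\,\big]$, the expected number of nodes that are descendants of at least one immune vaccinated node. *)

From HB Require Import structures.
From mathcomp Require Import all_boot all_order all_algebra.
From mathcomp Require Import all_classical all_reals all_analysis.
Set Implicit Arguments. Unset Strict Implicit. Unset Printing Implicit Defensive.
Import Order.TTheory GRing.Theory Num.Theory.
Local Open Scope classical_set_scope.
Local Open Scope ring_scope.

(* A finite rooted tree on the finite vertex type V is given by a parent map
   [par] with [par s = s] (s the root) and every vertex reaching s by iterating
   [par].  Edges are the pairs (par i, i) for i != s, hence are indexed by the
   non-root vertices: the type [edge s]. *)
Definition is_rooted_tree (V : finType) (s : V) (par : V -> V) : Prop :=
  par s = s /\ forall i : V, fconnect par i s.

Definition edge (V : finType) (s : V) := {i : V | i != s}.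

Definition anc (V : finType) (par : V -> V) (i : V) : {set V} :=
  [set j | (j != i) && fconnect par i j].

Definition desc (V : finType) (par : V -> V) (i : V) : {set V} :=
  [set j | i \in anc par j].

(* d_i: depth = number of edges from s to i = number of strict ancestors. *)
Definition depth (V : finType) (par : V -> V) (i : V) : nat := #|anc par i|.

(* Z_i: infection time, sum of X_e over the edges e on the path from s to i;
   the edge (par j, j) lies on that path iff j \in i |: A_i. *)
Definition infection_time (V : finType) (s : V) (par : V -> V) (Omega : Type)
  (R : realType) (X : edge s -> Omega -> R) (i : V) (w : Omega) : R :=
  \sum_(e : edge s | val e \in i |: anc par i) X e w.

Definition mutually_independent (d : measure_display) (T : measurableType d)
  (R : realType) (P : probability T R) (I : finType) (Y : I -> T -> R) : Prop :=
  forall B : I -> set R, (forall k, measurable (B k)) ->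
  P (\bigcap_(k in [set: I]) (Y k @^-1` B k)) = (\prod_(k : I) P (Y k @^-1` B k))%E.

Definition edges_and_tau (V : finType) (s : V) (Omega : Type) (R : realType)
  (X : edge s -> Omega -> R) (tau : Omega -> R) : option (edge s) -> Omega -> R :=
  fun k => match k with Some e => X e | None => tau end.

(* Nodes saved at outcome w: descendants of some immune vaccinated node. *)
Definition saved (V : finType) (s : V) (par : V -> V) (Omega : Type)
  (R : realType) (X : edge s -> Omega -> R) (tau : Omega -> R)
  (S : {set V}) (w : Omega) : {set V} :=
  (\bigcup_(i in S | tau w < infection_time par X i w) desc par i)%SET.

Definition reward (V : finType) (s : V) (par : V -> V) (d : measure_display)
  (T : measurableType d) (R : realType) (P : probability T R)
  (X : edge s -> T -> R) (tau : T -> R) (S : {set V}) : \bar R :=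
  'E_P[fun w => (#|saved par X tau S w|)%:R].

From HB Require Import structures.
From mathcomp Require Import all_boot all_order all_algebra.
From mathcomp Require Import all_classical all_reals all_analysis.
From mathcomp Require Import measurable_realfun.
Set Implicit Arguments. Unset Strict Implicit. Unset Printing Implicit Defensive.
Import Order.TTheory GRing.Theory Num.Theory.
Local Open Scope classical_set_scope.
Local Open Scope ring_scope.

(* Fix an outcome w and call a vertex immune when tau w < Z_i w.  The saved
   set of u |: S is the saved set of S plus, if u is immune, the descendants
   of u not yet saved; so Delta(S, u) is the expectation of this "gain".
   When the delays X_e are nonnegative, immunity is inherited by descendants,
   and a purely combinatorial analysis of the gain gives, outcome by outcome,
   with c = n_u - |U_{j in N_u cap S} N_j|:
   - if no vaccinated ancestor of u is immune, gain = c 1{u immune};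
   - otherwise gain = 0, and if v is the deepest vaccinated ancestor of u,
     the ancestors are immune as soon as v is, so gain + c 1{v immune} =
     c 1{u immune}.
   Exponential delays are almost surely nonnegative, so integrating these
   identities yields both formulas, and Delta >= 0 as an expected count. *)

Section RootedTree.
Variables (V : finType) (s : V) (par : V -> V).

Lemma fconnect_total (x a b : V) :
  fconnect par x a -> fconnect par x b -> fconnect par a b \/ fconnect par b a.
Proof.
move=> /iter_findex xa /iter_findex xb.
case: (leqP (findex par x a) (findex par x b)) => [le_ab | lt_ba].
  by left; rewrite -xb -xa -(subnK le_ab) iterD; apply: fconnect_iter.
by right; rewrite -xb -xa -(subnK (ltnW lt_ba)) iterD; apply: fconnect_iter.
Qed.

Hypothesis rooted : is_rooted_tree s par.

(* In a rooted tree climbing is antisymmetric: a cycle through a would force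
   a to be fixed by some positive power of par, hence to be the root s. *)
Lemma fconnect_antisym (a b : V) :
  fconnect par a b -> fconnect par b a -> a = b.
Proof.
case: rooted => par_s to_root /iter_findex ab /iter_findex ba.
set m := findex par a b in ab; set n := findex par b a in ba.
have cyc : iter (n + m) par a = a by rewrite iterD ab ba.
case: (posnP (n + m)) => [| nm_gt0].
  by move/eqP; rewrite addn_eq0 => /andP[_ /eqP m0]; rewrite -ab m0.
have cyc_k k : iter (k * (n + m)) par a = a.
  by elim: k => [|k IHk] //; rewrite mulSn iterD IHk cyc.
have := iter_findex (to_root a); set t := findex par a s => a_s.
have a_eq_s : a = s.
  rewrite -(cyc_k t) -(subnK (leq_pmulr t nm_gt0)) iterD a_s.
  by apply: iter_fix.
by rewrite -ab a_eq_s iter_fix.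
Qed.

Lemma in_desc (i x : V) : (x \in desc par i) = (i != x) && fconnect par x i.
Proof. by rewrite /desc /anc !inE. Qed.

Lemma in_anc (i x : V) : (x \in anc par i) = (x != i) && fconnect par i x.
Proof. by rewrite inE. Qed.

Lemma desc_trans (u j x : V) :
  j \in desc par u -> x \in desc par j -> x \in desc par u.
Proof.
rewrite !in_desc => /andP[uj ju] /andP[jx xj].
rewrite (connect_trans xj ju) andbT; apply: contraNneq uj => ux.
by rewrite -ux in xj; rewrite (fconnect_antisym xj ju).
Qed.

Lemma desc_comparable (i u x : V) :
  i != u -> x \in desc par i -> x \in desc par u ->
  i \in desc par u \/ u \in desc par i.
Proof.
rewrite !in_desc => iu /andP[_ xi] /andP[_ xu].
by case: (fconnect_total xi xu) => h; [left | right];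
  rewrite h andbT // eq_sym.
Qed.

Lemma depth_desc (v i : V) : i \in desc par v -> (depth par v < depth par i)%N.
Proof.
move=> vi; apply: proper_card; apply/properP; split.
  apply/fintype.subsetP => y; rewrite !in_anc => /andP[yv vy].
  move: vi; rewrite in_desc => /andP[_ iv].
  rewrite (connect_trans iv vy) andbT; apply: contraNneq yv => yi.
  by rewrite yi in vy *; rewrite (fconnect_antisym iv vy).
by exists v; [rewrite in_anc -in_desc | rewrite in_anc eqxx].
Qed.

End RootedTree.

Lemma path_edges_sub (V : finType) (par : V -> V) (x y e : V) :
  fconnect par x y -> e \in y |: anc par y -> e \in x |: anc par x.
Proof.
rewrite !inE => xy /orP[/eqP -> | /andP[_ ye]].
  by rewrite xy andbT orbN.
by rewrite (connect_trans xy ye) andbT orbN.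
Qed.

Section SavedSets.
Variables (V : finType) (s : V) (par : V -> V).
Hypothesis rooted : is_rooted_tree s par.

Definition saved_by (b : V -> bool) (S : {set V}) : {set V} :=
  (\bigcup_(i in S | b i) desc par i)%SET.

Definition gain (b : V -> bool) (S : {set V}) (u : V) : nat :=
  (#|desc par u :\: saved_by b S| * b u)%N.

Definition unshielded (S : {set V}) (u : V) : nat :=
  (#|desc par u| - #|(\bigcup_(j in desc par u :&: S) desc par j)%SET|)%N.

Lemma shielded_sub (S : {set V}) (u : V) :
  (\bigcup_(j in desc par u :&: S) desc par j)%SET \subset desc par u.
Proof.
apply/bigcupsP => j; rewrite finset.in_setI => /andP[ju _].
by apply/fintype.subsetP => x; apply: (desc_trans rooted ju).
Qed.

Lemma unshielded_natr (R : pzRingType) (S : {set V}) (u : V) :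
  (unshielded S u)%:R = #|desc par u|%:R -
    #|(\bigcup_(j in desc par u :&: S) desc par j)%SET|%:R :> R.
Proof. by rewrite natrB // subset_leq_card // shielded_sub. Qed.

Definition down_closed (b : V -> bool) : Prop :=
  forall x y, fconnect par x y -> b y -> b x.

Lemma card_setUD (T : finType) (A B : {set T}) :
  #|A :|: B| = (#|B| + #|A :\: B|)%N.
Proof.
rewrite -(cardsID B (A :|: B)); congr (_ + _)%N.
  by rewrite finset.setIC finset.setKU.
by rewrite finset.setDUl finset.setDv finset.setU0.
Qed.

Lemma card_saved_by_setU1 (b : V -> bool) (S : {set V}) (u : V) : u \notin S ->
  #|saved_by b (u |: S)| = (#|saved_by b S| + gain b S u)%N.
Proof.
move=> uS; rewrite /gain /saved_by !big_mkcondr /= big_setU1 //=.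
by case: (b u); rewrite /= ?finset.set0U ?muln0 ?addn0 ?muln1 ?card_setUD.
Qed.

(* An immune vaccinated ancestor already saves everything below u. *)
Lemma gain_immune_ancestor (b : V -> bool) (S : {set V}) (u i : V) :
  i \in S :&: anc par u -> b i -> gain b S u = 0%N.
Proof.
rewrite finset.in_setI => /andP[iS iu] bi; rewrite /gain.
suff -> : desc par u :\: saved_by b S = finset.set0 by rewrite cards0.
apply/setP => x; rewrite finset.in_setD finset.in_set0.
apply/negP => /andP[/negP x_unsaved xu].
apply: x_unsaved; apply/bigcupP; exists i; first by rewrite iS bi.
have ui : u \in desc par i by rewrite /desc inE.
exact: (desc_trans rooted ui xu).
Qed.

(* Without immune vaccinated ancestor, u saves exactly its unshielded
   descendants (when immune): those below an immune vaccinated vertex are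
   below a vaccinated descendant of u, which is immune by down-closure. *)
Lemma gain_no_immune_ancestor (b : V -> bool) (S : {set V}) (u : V) :
  down_closed b -> u \notin S ->
  (forall i, i \in S :&: anc par u -> ~~ b i) ->
  gain b S u = (unshielded S u * b u)%N.
Proof.
move=> b_down uS no_anc; rewrite /gain /unshielded.
case bu: (b u); rewrite ?muln0 // !muln1.
set U := (\bigcup_(j in desc par u :&: S) desc par j)%SET.
have U_sub : U \subset desc par u := shielded_sub S u.
suff -> : desc par u :\: saved_by b S = desc par u :\: U.
  by rewrite cardsD (finset.setIidPr U_sub).
apply/setP => x; rewrite !finset.in_setD.
case xu: (x \in desc par u); rewrite ?andbF // !andbT; congr negb.
apply/bigcupP/bigcupP => [[i /andP[iS bi] xi] | [j]].
  have iu : i != u by apply: contraNneq uS => <-.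
  case: (desc_comparable iu xi xu) => [ui | iu_desc].
    by exists i => //; rewrite inE ui iS.
  have : i \in S :&: anc par u by move: iu_desc; rewrite finset.in_setI iS /desc inE.
  by move/no_anc; rewrite bi.
rewrite inE => /andP[ju jS] xj; exists j => //; rewrite jS /=.
by apply: (b_down _ u) bu; move: ju; rewrite in_desc => /andP[].
Qed.

(* If the deepest vaccinated ancestor v is not immune, no vaccinated ancestor
   is: each of them is an ancestor of v. *)
Lemma deepest_not_immune (b : V -> bool) (S : {set V}) (u v : V) :
  down_closed b -> v \in S :&: anc par u ->
  (forall v', v' \in S :&: anc par u -> (depth par v' <= depth par v)%N) ->
  ~~ b v -> forall i, i \in S :&: anc par u -> ~~ b i.
Proof.
move=> b_down v_anc v_deepest bv i i_anc; apply: contra bv => bi.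
move: (v_anc) (i_anc); rewrite !finset.in_setI !in_anc => /andP[_ /andP[_ uv]].
move=> /andP[_ /andP[iu ui]].
case: (fconnect_total ui uv) => [iv | vi]; last exact: b_down vi bi.
case: (eqVneq i v) => [<- // | neq_iv].
have : i \in desc par v by rewrite in_desc eq_sym neq_iv.
by move/(depth_desc rooted); rewrite ltnNge v_deepest.
Qed.

Lemma gain_deepest_ancestor (b : V -> bool) (S : {set V}) (u v : V) :
  down_closed b -> u \notin S -> v \in S :&: anc par u ->
  (forall v', v' \in S :&: anc par u -> (depth par v' <= depth par v)%N) ->
  (gain b S u + unshielded S u * b v = unshielded S u * b u)%N.
Proof.
move=> b_down uS v_anc v_deepest.
have [bv | nbv] := boolP (b v).
  have bu : b u.
    by apply: (b_down _ v) bv; move: v_anc; rewrite finset.in_setI in_anc => /andP[_ /andP[]].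
  by rewrite (gain_immune_ancestor v_anc bv) bu.
rewrite muln0 addn0; apply: gain_no_immune_ancestor => //.
exact: deepest_not_immune v_anc v_deepest nbv.
Qed.

End SavedSets.

Lemma exponential_ae_ge0 (R : realType) (d : measure_display)
  (Omega : measurableType d) (P : probability Omega R) (lam : R)
  (Y : {mfun Omega >-> R}) :
  (forall A : set R, measurable A -> P (Y @^-1` A) = exponential_prob lam A) ->
  {ae P, forall w, 0 <= Y w}.
Proof.
move=> lawY; exists (Y @^-1` `]-oo, 0[); split.
- by apply: measurable_funPTI; apply: measurable_itv.
- rewrite lawY; last exact: measurable_itv.
  rewrite /exponential_prob integral0_eq // => x; rewrite /= in_itv /= => x_lt0.
  by rewrite lt0_exponential_pdf.
- by move=> w /= Yw_lt0; rewrite in_itv /= ltNge; apply/negP.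
Qed.

Section InfectionModel.
Variables (R : realType) (V : finType) (s : V) (par : V -> V).
Variables (d : measure_display) (Omega : measurableType d).
Variables (X : edge s -> Omega -> R) (tau : Omega -> R).
Hypothesis measurable_X : forall e, measurable_fun setT (X e).
Hypothesis measurable_tau : measurable_fun setT tau.

Let Z := infection_time par X.

Definition immune (w : Omega) (i : V) : bool := tau w < Z i w.

Lemma saved_immune (S : {set V}) (w : Omega) :
  saved par X tau S w = saved_by par (immune w) S.
Proof. by []. Qed.

(* With nonnegative edge delays, infection times grow along root-to-leaf
   paths, so immunity is inherited by descendants. *)
Lemma immune_down_closed (w : Omega) :
  (forall e, 0 <= X e w) -> down_closed par (immune w).
Proof.
move=> X_ge0 x y xy; rewrite /immune => /lt_le_trans; apply.
rewrite /Z /infection_time [leLHS]big_mkcond [leRHS]big_mkcond /=.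
apply: ler_sum => e _; case: ifP => [e_y | _]; first by rewrite (path_edges_sub xy e_y).
by case: ifP.
Qed.

Lemma measurable_infection_time (i : V) : measurable_fun setT (Z i).
Proof.
rewrite /Z /infection_time.
under eq_fun do rewrite big_mkcond.
apply: measurable_sum => e.
by case: (val e \in _); [exact: measurable_X | exact: measurable_cst].
Qed.

Lemma measurable_immune (i : V) : measurable [set w | immune w i].
Proof.
have -> : [set w | immune w i] = setT `&` ((fun w => tau w < Z i w) @^-1` [set true]).
  by apply/seteqP; split => w /=; [move=> ?; split | case].
exact: measurable_fun_ltr measurable_tau (measurable_infection_time i) _ _ _.
Qed.

(* The number of saved vertices is a measurable function of the outcome: it
   counts the vertices x lying below some immune vaccinated vertex. *)
Lemma measurable_card_saved (S : {set V}) :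
  measurable_fun setT (fun w => (#|saved par X tau S w|)%:R : R).
Proof.
pose below x := \bigcup_(i in [set i | (i \in S) && (x \in desc par i)])
  [set w | immune w i].
have -> : (fun w => (#|saved par X tau S w|)%:R : R) =
    (fun w => \sum_(x <- index_enum V) (\1_(below x) w : R)).
  apply/funext => w; rewrite -sum1_card natr_sum big_mkcond /=.
  apply: eq_bigr => x _; rewrite indicE.
  suff -> : (x \in saved par X tau S w) = (w \in below x) by case: (w \in below x).
  apply/idP/idP => [/bigcupP[i /andP[iS wi] xi] | /set_mem[i /= /andP[iS xi] wi]].
    by apply/mem_set; exists i => //=; rewrite iS xi.
  by apply/bigcupP; exists i; rewrite ?iS.
apply: measurable_sum => x; apply: measurable_indic.
by apply: fin_bigcup_measurable; [exact: finite_finset | move=> i _; apply: measurable_immune].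
Qed.

End InfectionModel.

Section RewardIncrement.
Variables (R : realType) (V : finType) (s : V) (par : V -> V).
Variables (d : measure_display) (Omega : measurableType d).
Variables (P : probability Omega R) (X : edge s -> Omega -> R) (tau : Omega -> R).
Hypothesis rooted : is_rooted_tree s par.
Hypothesis measurable_X : forall e, measurable_fun setT (X e).
Hypothesis measurable_tau : measurable_fun setT tau.
Hypothesis X_ge0 : {ae P, forall w e, 0 <= X e w}.

Let r := reward par P X tau.
Local Notation immune := (immune par X tau).

Let card_saved_setU1 (S : {set V}) (u : V) (w : Omega) : u \notin S ->
  (#|saved par X tau (u |: S) w|)%:R =
    (#|saved par X tau S w|)%:R + (gain par (immune w) S u)%:R :> R.
Proof. by move=> uS; rewrite !saved_immune card_saved_by_setU1 ?natrD. Qed.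

(* The gain is measurable, as a difference of two saved-set counts. *)
Lemma measurable_gain (S : {set V}) (u : V) : u \notin S ->
  measurable_fun setT (fun w => (gain par (immune w) S u)%:R : R).
Proof.
move=> uS; have -> : (fun w => (gain par (immune w) S u)%:R) =
    (fun w => (#|saved par X tau (u |: S) w|)%:R - (#|saved par X tau S w|)%:R :> R).
  by apply/funext => w; rewrite card_saved_setU1 // addrAC subrr add0r.
by apply: measurable_funB; apply: measurable_card_saved.
Qed.

(* Rewards are finite, being bounded by |V|. *)
Lemma reward_fin_num (S : {set V}) : r S \is a fin_num.
Proof.
rewrite /r /reward unlock ge0_fin_numE; last by apply: integral_ge0 => w _; rewrite lee_fin.
apply: (@le_lt_trans _ _ (\int[P]_w (#|V|%:R)%:E)%E).
  apply: ge0_le_integral => //.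
  - by apply/measurable_EFinP; apply: measurable_card_saved.
  - by move=> w _; rewrite lee_fin ler_nat max_card.
by rewrite integral_cst // [X in (_ * X)%E]probability_setT mule1 ltry.
Qed.

Lemma reward_increment (S : {set V}) (u : V) : u \notin S ->
  (r (u |: S) - r S = \int[P]_w (gain par (immune w) S u)%:R%:E)%E.
Proof.
move=> uS; have := reward_fin_num S; rewrite /r /reward unlock => rS_fin.
under eq_integral => w _ do rewrite card_saved_setU1 // EFinD.
rewrite ge0_integralD //.
- by rewrite [X in (X - _)%E]addeC addeK.
- by apply/measurable_EFinP; apply: measurable_card_saved.
- by apply/measurable_EFinP; apply: measurable_gain.
Qed.

Let indic_immune (i : V) (w : Omega) :
  \1_[set w | immune w i] w = (immune w i)%:R :> R.
Proof.
rewrite indicE; case: (boolP (immune w i)) => [wi | nwi]; first by rewrite mem_set.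
by rewrite memNset //; apply/negP.
Qed.

Let measurable_immune_indic (i : V) :
  measurable_fun setT (fun w => (immune w i)%:R : R).
Proof.
under eq_fun => w do rewrite -indic_immune.
exact/measurable_indic/measurable_immune.
Qed.

Lemma integral_immune (c : nat) (i : V) :
  (\int[P]_w (c%:R * (immune w i)%:R)%:E = c%:R%:E * P [set w | immune w i])%E.
Proof.
have m_immune := measurable_immune par measurable_X measurable_tau i.
transitivity (c%:R%:E * \int[P]_w (\1_[set w | immune w i] w : R)%:E)%E.
  rewrite -ge0_integralZl_EFin //; last exact/measurable_EFinP/measurable_indic.
  by apply: eq_integral => w _; rewrite indic_immune EFinM.
by rewrite integral_indic ?setIT.
Qed.

Let measurable_scaled_immune (c : nat) (i : V) :
  measurable_fun setT (fun w => (c%:R * (immune w i)%:R : R)%:E).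
Proof. exact/measurable_EFinP/measurable_funM/measurable_immune_indic. Qed.

Lemma reward_increment_no_ancestor (S : {set V}) (u : V) :
  u \notin S -> S :&: anc par u = finset.set0 ->
  (r (u |: S) - r S = (unshielded par S u)%:R%:E * P [set w | immune w u])%E.
Proof.
move=> uS no_anc; rewrite reward_increment // -integral_immune.
apply: ae_eq_integral => //; first exact/measurable_EFinP/measurable_gain.
apply: filterS X_ge0 => w Xw_ge0 _; congr EFin; rewrite -natrM.
rewrite (gain_no_immune_ancestor rooted) //; first exact: immune_down_closed.
by move=> i; rewrite no_anc finset.in_set0.
Qed.

(* Second case: v is the deepest vaccinated ancestor of u.  Outcome by
   outcome, gain + c 1{v immune} = c 1{u immune}; integrate and solve. *)
Lemma reward_increment_deepest_ancestor (S : {set V}) (u v : V) :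
  u \notin S -> v \in S :&: anc par u ->
  (forall v', v' \in S :&: anc par u -> (depth par v' <= depth par v)%N) ->
  (r (u |: S) - r S = (unshielded par S u)%:R%:E *
     (P [set w | immune w u] - P [set w | immune w v]))%E.
Proof.
move=> uS v_anc v_deepest; set c := unshielded par S u.
have balance : (\int[P]_w (gain par (immune w) S u)%:R%:E +
    c%:R%:E * P [set w | immune w v] = c%:R%:E * P [set w | immune w u])%E.
  rewrite -!integral_immune -ge0_integralD //; last exact/measurable_EFinP/measurable_gain.
  apply: ae_eq_integral => //.
    by apply: emeasurable_funD => //; apply/measurable_EFinP/measurable_gain.
  apply: filterS X_ge0 => w Xw_ge0 _; rewrite -EFinD -!natrM -natrD.
  by rewrite (gain_deepest_ancestor rooted) //; apply: immune_down_closed.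
have P_fin (i : V) : P [set w | immune w i] \is a fin_num.
  by rewrite fin_num_measure //; apply: measurable_immune.
rewrite reward_increment // muleBr ?fin_num_adde_defl ?fin_numN //.
by rewrite -balance addeK // fin_numM.
Qed.

End RewardIncrement.

Theorem mainTheorem3 (R : realType) (V : finType) (s : V) (par : V -> V)
  (lam : R) (d : measure_display) (Omega : measurableType d)
  (P : probability Omega R) (X : edge s -> {RV P >-> R}) (tau : {RV P >-> R}) :
  is_rooted_tree s par -> 0 < lam ->
  (forall (e : edge s) (A : set R), measurable A ->
     P (X e @^-1` A) = exponential_prob lam A) ->
  (forall w, 0 <= tau w) ->
  mutually_independent P (edges_and_tau (fun e => X e : Omega -> R) tau) ->
  forall (S : {set V}) (u : V), u \notin S ->
  let r := reward par P (fun e => X e : Omega -> R) tau in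
  let Z := infection_time par (fun e => X e : Omega -> R) in
  let Delta := (r (u |: S) - r S)%E in
  let c := (#|desc par u|%:R - #|(\bigcup_(j in desc par u :&: S) desc par j)%SET|%:R : R) in
  [/\ S :&: anc par u = finset.set0 ->
        Delta = (c%:E * P [set w | (tau w < Z u w)%R])%E,
      forall v : V, v \in S :&: anc par u ->
        (forall v' : V, v' \in S :&: anc par u -> (depth par v' <= depth par v)%N) ->
        Delta = (c%:E * (P [set w | (tau w < Z u w)%R] - P [set w | (tau w < Z v w)%R]))%E
    & (0 <= Delta)%E].
Proof.
move=> rooted _ law_X _ _ S u uS r Z Delta c.
have X_ge0 : {ae P, forall w e, 0 <= X e w}.
  by apply: filter_forall => e; apply: exponential_ae_ge0 (law_X e).
rewrite /c -(unshielded_natr rooted); split.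
- exact: reward_increment_no_ancestor.
- by move=> v; apply: reward_increment_deepest_ancestor.
- rewrite /Delta /r reward_increment //.
  by apply: integral_ge0 => w _; rewrite lee_fin.
Qed.
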